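(* Let $\varepsilon\in(0,1)$, $4\pi/5<a<\pi$ and $t_0>2\pi$. Then there exists $v\in(0,1)$ such that $T_0(Q,\Omega)<\infty$, where $Q=\{(t,x): t\ge0,\ x\in\omega(t)\}$ with $\omega(t)=\{(r,\theta):1-\varepsilon<r\le1,\ \theta_0(t)<\theta<a+\theta_0(t)\}$, $\theta_0(t)=0$ for $0\le t<t_0$ and $\theta_0(t)=v(t-t_0)$ for $t\ge t_0$.
   Context: $\Omega=\{(x,y)\in\mathbb{R}^2:x^2+y^2<1\}$ is the Euclidean unit disk, with polar coordinates $(r,\theta)$ (angles mod $2\pi$; wave equation with Dirichlet boundary condition). Rays (projections of generalized bicharacteristics, parametrized by time) are the curves $t\mapsto x(t)\in\overline\Omega$, $t\in\mathbb{R}$: unit-speed billiard trajectories (straight segments at unit speed reflecting specularly at the unit circle) and unit-speed motions along the unit circle in either direction (gliding rays). $(Q,T)$ satisfies the time-dependent geometric control condition if every ray admits $t\in(0,T)$ with $(t,x(t))\in Q$; $T_0(Q,\Omega)$ is the infimum of such $T>0$, $+\infty$ if none. *)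

From Stdlib Require Import Reals ZArith.
Open Scope R_scope.

Definition pt := (R * R)%type.

Definition dot (u w : pt) : R := fst u * fst w + snd u * snd w.

(* specular reflection of the velocity u at the boundary point n (|n| = 1,
   n is the unit normal of the unit circle at n) *)
Definition reflect_vel (u n : pt) : pt :=
  (fst u - 2 * dot u n * fst n, snd u - 2 * dot u n * snd n).

Definition billiard_ray (x : R -> pt) : Prop :=
  exists (tau : Z -> R) (vel : Z -> pt),
    (forall k, tau k < tau (k + 1)%Z) /\
    (forall M, exists k, M < tau k) /\
    (forall M, exists k, tau k < M) /\
    (forall t, dot (x t) (x t) <= 1) /\
    (forall k, dot (x (tau k)) (x (tau k)) = 1) /\
    (forall k, dot (vel k) (vel k) = 1) /\
    (forall k t, tau k <= t <= tau (k + 1)%Z ->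
       x t = (fst (x (tau k)) + (t - tau k) * fst (vel k),
              snd (x (tau k)) + (t - tau k) * snd (vel k))) /\
    (forall k, vel (k + 1)%Z = reflect_vel (vel k) (x (tau (k + 1)%Z))).

Definition gliding_ray (x : R -> pt) : Prop :=
  exists (th1 s : R), (s = 1 \/ s = -1) /\
    forall t, x t = (cos (th1 + s * t), sin (th1 + s * t)).

Definition ray (x : R -> pt) : Prop := billiard_ray x \/ gliding_ray x.

Definition GCC (Q : R -> pt -> Prop) (T : R) : Prop :=
  forall x, ray x -> exists t, 0 < t < T /\ Q t (x t).

(* T_0(Q, Omega) < +oo : the set of T > 0 with GCC is nonempty. *)
Definition T0_finite (Q : R -> pt -> Prop) : Prop :=
  exists T, 0 < T /\ GCC Q T.

Definition theta0 (v t0 t : R) : R :=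
  if Rlt_dec t t0 then 0 else v * (t - t0).

Definition in_omega (eps a th0 : R) (p : pt) : Prop :=
  exists r th, 1 - eps < r <= 1 /\ th0 < th < a + th0 /\
    p = (r * cos th, r * sin th).

Definition Qset (eps a t0 v : R) (t : R) (p : pt) : Prop :=
  0 <= t /\ in_omega eps a (theta0 v t0 t) p.

(* A gliding ray passes through the static window before t0 > 2π. A billiard
   ray hits the circle at the angles φ + n d at the times τ0 + n L, with chord
   length L = 2 sin(d/2). After t0 the window turns at speed v = 1/2, so in
   its frame the hits advance by g = d - L/2 per bounce. Unless g is within
   1/10 of π, one of g, g - 2π, 2g - 2π is a nonzero step shorter than the
   window, so a hit falls in the window within boundedly many bounces. If g is
   close to π, then 2π - a < d < π + a/2 (this is where a > 4π/5 is needed),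
   and one of any three consecutive hits lies in the static window before t0. *)

From Stdlib Require Import Reals Lra Lia ZArith.
Open Scope R_scope.

Lemma PI_lt_7_2 : PI < 7/2.
Proof.
  pose proof (PI_ineq 1) as [_ H]. simpl in H. unfold tg_alt, PI_tg in H. simpl in H. lra.
Qed.

Lemma PI_gt_3 : 3 < PI.
Proof. pose proof PI2_3_2. lra. Qed.

Lemma cos_sin_add_2PI_Z x (m : Z) :
  cos (x + 2 * PI * IZR m) = cos x /\ sin (x + 2 * PI * IZR m) = sin x.
Proof.
  destruct m as [|p|p].
  - simpl. replace (x + 2 * PI * 0) with x by ring. auto.
  - rewrite <- (positive_nat_Z p), <- INR_IZR_INZ.
    replace (x + 2 * PI * INR (Pos.to_nat p)) with (x + 2 * INR (Pos.to_nat p) * PI) by ring.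
    rewrite cos_period, sin_period. auto.
  - rewrite <- Pos2Z.opp_pos, opp_IZR, <- (positive_nat_Z p), <- INR_IZR_INZ.
    set (y := x + 2 * PI * - INR (Pos.to_nat p)).
    replace x with (y + 2 * INR (Pos.to_nat p) * PI) by (unfold y; ring).
    rewrite cos_period, sin_period. auto.
Qed.

Lemma shift_into_0_2PI y : exists m : Z, 0 < y + 2 * PI * IZR m <= 2 * PI.
Proof.
  pose proof PI_RGT_0.
  exists (up (- y / (2 * PI))).
  destruct (archimed (- y / (2 * PI))) as [H1 H2].
  set (U := IZR (up (- y / (2 * PI)))) in *.
  assert (E : - y = 2 * PI * (- y / (2 * PI))) by (field; lra).
  set (w := - y / (2 * PI)) in *.
  split; nra.
Qed.

Lemma grid_point_after tau0 L y : 0 < L -> tau0 <= y ->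
  exists n : nat, y < tau0 + INR n * L <= y + L.
Proof.
  intros HL Hy. set (q := (y - tau0) / L).
  assert (Hq : 0 <= q).
  { unfold q. apply Rmult_le_pos; [lra | left; apply Rinv_0_lt_compat; lra]. }
  destruct (archimed q) as [H1 H2].
  assert (Hup : (0 < up q)%Z) by (apply lt_IZR; simpl; lra).
  exists (Z.to_nat (up q)). rewrite INR_IZR_INZ, Z2Nat.id by lia.
  assert (E : y - tau0 = q * L) by (unfold q; field; lra).
  set (U := IZR (up q)) in *.
  assert (U * L <= q * L + L) by nra.
  assert (q * L < U * L) by nra.
  split; lra.
Qed.

Definition in_arc (a th : R) : Prop := exists m : Z, 0 < th + 2 * PI * IZR m < a.

Lemma in_arc_progression_pos a psi s : 0 < s < a ->
  exists j : nat, INR j * s <= 2 * PI + s /\ in_arc a (psi + INR j * s).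
Proof.
  intros Hs. pose proof PI_RGT_0.
  destruct (shift_into_0_2PI psi) as [m Hm].
  destruct (grid_point_after (psi + 2 * PI * IZR m - 2 * PI) s 0) as [j Hj]; [lra | lra |].
  exists j. split; [lra |].
  exists (m - 1)%Z. rewrite minus_IZR. lra.
Qed.

Lemma in_arc_progression a psi s : 0 < Rabs s < a ->
  exists j : nat, INR j * Rabs s <= 2 * PI + Rabs s /\ in_arc a (psi + INR j * s).
Proof.
  intros Hs. destruct (Rle_or_lt 0 s) as [Hpos | Hneg].
  - rewrite Rabs_pos_eq in * by lra. apply in_arc_progression_pos; lra.
  - rewrite Rabs_left in * by lra.
    destruct (in_arc_progression_pos a (a - psi) (- s)) as (j & Hj & m & Hm); [lra |].
    exists j. split; [lra |]. exists (- m)%Z. rewrite opp_IZR. lra.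
Qed.

Lemma in_arc_three_steps a psi d : 2 * PI - a < d < PI + a / 2 ->
  exists i : nat, (i <= 2)%nat /\ in_arc a (psi + INR i * d).
Proof.
  intros Hd. pose proof PI_RGT_0.
  destruct (shift_into_0_2PI psi) as [m Hm].
  destruct (Rlt_dec (psi + 2 * PI * IZR m) a) as [H1 | H1].
  { exists 0%nat. split; [lia |]. exists m. simpl. lra. }
  destruct (Rlt_dec (psi + 2 * PI * IZR m + d - 2 * PI) a) as [H2 | H2].
  { exists 1%nat. split; [lia |]. exists (m - 1)%Z. rewrite minus_IZR. simpl. lra. }
  exists 2%nat. split; [lia |]. exists (m - 2)%Z. rewrite minus_IZR. simpl. lra.
Qed.

Definition arc_visits_within (a g L H : R) : Prop :=
  forall psi, exists j : nat, INR j * L <= H /\ in_arc a (psi + INR j * g).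

Lemma arc_visits_within_multiple a g L H q s (k : nat) (m : Z) :
  s = INR k * g + 2 * PI * IZR m -> 0 < Rabs s < a -> 0 <= q ->
  INR k * L <= q * Rabs s -> q * (2 * PI + Rabs s) <= H ->
  arc_visits_within a g L H.
Proof.
  intros Es Hs Hq Hk HH psi.
  destruct (in_arc_progression a psi s Hs) as (j & Hj & m' & Hm').
  exists (k * j)%nat. rewrite mult_INR. split.
  - assert (INR j * (INR k * L) <= INR j * (q * Rabs s))
      by (apply Rmult_le_compat_l; [apply pos_INR | exact Hk]).
    assert (q * (INR j * Rabs s) <= q * (2 * PI + Rabs s))
      by (apply Rmult_le_compat_l; lra).
    lra.
  - exists (m' + Z.of_nat j * m)%Z.
    rewrite plus_IZR, mult_IZR, <- INR_IZR_INZ. rewrite Es in Hm'. lra.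
Qed.

Lemma polar_angle x y : x * x + y * y = 1 ->
  exists d, 0 <= d <= 2 * PI /\ cos d = x /\ sin d = y.
Proof.
  intro H. assert (Hx : -1 <= x <= 1) by nra.
  pose proof (acos_bound x).
  destruct (Rle_or_lt 0 y) as [Hy | Hy].
  - exists (acos x). split; [lra |]. split; [apply cos_acos; auto |].
    rewrite sin_acos by auto. replace (1 - x²) with (y * y) by (unfold Rsqr; lra).
    apply sqrt_square; auto.
  - exists (2 * PI - acos x). split; [lra |]. split.
    + rewrite cos_minus, cos_2PI, sin_2PI, cos_acos by auto; ring.
    + rewrite sin_minus, cos_2PI, sin_2PI, sin_acos by auto.
      replace (1 - x²) with ((- y) * (- y)) by (unfold Rsqr; lra).
      rewrite sqrt_square by lra. ring.
Qed.

Lemma sin_sq_le_sq w : sin w * sin w <= w * w.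
Proof.
  assert (K : forall z, 0 < z -> - z < sin z < z).
  { intros z Hz. split; [| apply sin_lt_x; exact Hz].
    destruct (Rle_or_lt z 1).
    - assert (0 <= sin z) by (apply sin_ge_0; pose proof PI_gt_3; lra). lra.
    - pose proof (SIN_bound z). lra. }
  destruct (Rtotal_order w 0) as [Hw | [-> | Hw]].
  - pose proof (K (- w)) as Kw. rewrite sin_neg in Kw. nra.
  - rewrite sin_0. lra.
  - pose proof (K w Hw). nra.
Qed.

Lemma chord_lt_arcs d : 0 < d < 2 * PI ->
  0 < sin (d / 2) /\ 2 * sin (d / 2) < d /\ 2 * sin (d / 2) < 2 * PI - d.
Proof.
  intros Hd. split; [apply sin_gt_0; lra |]. split.
  - pose proof (sin_lt_x (d / 2)). lra.
  - rewrite <- (sin_PI_x (d / 2)). pose proof (sin_lt_x (PI - d / 2)). lra.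
Qed.

Lemma chord_length d L : 0 < d < 2 * PI -> 0 < L -> cos d = 1 - L * L / 2 ->
  L = 2 * sin (d / 2).
Proof.
  intros Hd HL Hc.
  assert (Hsin : 0 < sin (d / 2)) by (apply sin_gt_0; lra).
  assert (Hc2 : cos d = 1 - 2 * sin (d / 2) * sin (d / 2)).
  { rewrite <- cos_2a_sin. f_equal. field. }
  assert (Hsq : (2 * sin (d / 2) + L) * (2 * sin (d / 2) - L) = 0) by nra.
  apply Rmult_integral in Hsq as [Hq | Hq]; lra.
Qed.

Lemma chord_angle_near_period_two a d : 4 * PI / 5 < a ->
  PI - 1/10 < d - sin (d / 2) < PI + 1/10 -> 2 * PI - a < d < PI + a / 2.
Proof.
  intros Ha Hg. pose proof PI_gt_3. pose proof PI_lt_7_2.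
  pose proof (SIN_bound (d / 2)).
  split; [| lra].
  set (z := PI / 2 - d / 2).
  assert (Esz : sin (d / 2) = 1 - 2 * sin (z / 2) * sin (z / 2)).
  { rewrite <- cos_2a_sin, <- sin_shift. f_equal. unfold z. field. }
  assert (sin (z / 2) * sin (z / 2) <= (z / 2) * (z / 2)) by apply sin_sq_le_sq.
  assert (z * z <= 3025 / 10000) by (unfold z; nra).
  lra.
Qed.

Definition cross (u w : pt) : R := fst u * snd w - snd u * fst w.

Lemma dot_cross_sq (p u : pt) :
  dot p u * dot p u + cross p u * cross p u = dot p p * dot u u.
Proof. destruct p, u. unfold dot, cross. simpl. ring. Qed.

(* Reflection at [q] gives the new velocity the same angle with the radius
   at [q] as [u] made with the radius at [p]. *)
Lemma reflection_invariants (p u q : pt) (D : R) :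
  dot p p = 1 -> dot u u = 1 -> dot q q = 1 -> 0 < D ->
  q = (fst p + D * fst u, snd p + D * snd u) ->
  D = -2 * dot p u /\ dot q (reflect_vel u q) = dot p u /\
  cross q (reflect_vel u q) = cross p u.
Proof.
  destruct p as [px py], u as [ux uy], q as [qx qy].
  unfold dot, cross, reflect_vel; simpl.
  intros Hp Hu Hq HD E. injection E as E1 E2.
  assert (HD2 : D = -2 * (px * ux + py * uy)).
  { assert (H : D * (D + 2 * (px * ux + py * uy)) = 0).
    { subst qx qy.
      transitivity ((px + D * ux) * (px + D * ux) + (py + D * uy) * (py + D * uy) - 1
        + D * D * (1 - (ux * ux + uy * uy)) - (px * px + py * py - 1)); [ring |].
      rewrite Hq, Hu, Hp. ring. }
    apply Rmult_integral in H as [H | H]; lra. }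
  split; [exact HD2 |]. split.
  - set (e := ux * qx + uy * qy).
    transitivity (e - 2 * e * (qx * qx + qy * qy)); [unfold e, dot; simpl; ring |]. rewrite Hq.
    assert (Ee : e = px * ux + py * uy + D * (ux * ux + uy * uy)) by (unfold e; subst; ring).
    rewrite Hu in Ee. rewrite Ee, HD2. ring.
  - subst. ring.
Qed.

Lemma rotate_by_chord A d L (u : pt) :
  cos d = 1 + L * dot (cos A, sin A) u -> sin d = L * cross (cos A, sin A) u ->
  (cos A + L * fst u, sin A + L * snd u) = (cos (A + d), sin (A + d)).
Proof.
  destruct u as [ux uy]. unfold dot, cross; simpl. intros Hc Hs.
  pose proof (sin2_cos2 A) as E. unfold Rsqr in E.
  rewrite cos_plus, sin_plus, Hc, Hs. f_equal.
  - transitivity (cos A + L * ux * (sin A * sin A + cos A * cos A)); [rewrite E |]; ring.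
  - transitivity (sin A + L * uy * (sin A * sin A + cos A * cos A)); [rewrite E |]; ring.
Qed.

Definition regular_bounces (x : R -> pt) (tau0 phi d : R) : Prop :=
  forall n : nat,
    x (tau0 + INR n * (2 * sin (d / 2))) = (cos (phi + INR n * d), sin (phi + INR n * d)).

Section BilliardBounces.

Variables (x : R -> pt) (tau : Z -> R) (vel : Z -> pt).
Hypothesis tau_incr : forall k, tau k < tau (k + 1)%Z.
Hypothesis bounce_on_circle : forall k, dot (x (tau k)) (x (tau k)) = 1.
Hypothesis vel_unit : forall k, dot (vel k) (vel k) = 1.
Hypothesis straight_segments : forall k t, tau k <= t <= tau (k + 1)%Z ->
  x t = (fst (x (tau k)) + (t - tau k) * fst (vel k),
         snd (x (tau k)) + (t - tau k) * snd (vel k)).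
Hypothesis specular : forall k, vel (k + 1)%Z = reflect_vel (vel k) (x (tau (k + 1)%Z)).

Lemma bounce_chord k :
  x (tau (k + 1)%Z) = (fst (x (tau k)) + (tau (k + 1)%Z - tau k) * fst (vel k),
                       snd (x (tau k)) + (tau (k + 1)%Z - tau k) * snd (vel k)).
Proof. apply straight_segments. pose proof (tau_incr k). lra. Qed.

Lemma bounce_invariants k :
  tau (k + 1)%Z - tau k = -2 * dot (x (tau k)) (vel k) /\
  dot (x (tau (k + 1)%Z)) (vel (k + 1)%Z) = dot (x (tau k)) (vel k) /\
  cross (x (tau (k + 1)%Z)) (vel (k + 1)%Z) = cross (x (tau k)) (vel k).
Proof.
  rewrite specular. apply reflection_invariants; auto using bounce_chord.
  pose proof (tau_incr k). lra.
Qed.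

Variable k0 : Z.

Lemma bounce_invariants_from n :
  dot (x (tau (k0 + Z.of_nat n))) (vel (k0 + Z.of_nat n)) = dot (x (tau k0)) (vel k0) /\
  cross (x (tau (k0 + Z.of_nat n))) (vel (k0 + Z.of_nat n)) = cross (x (tau k0)) (vel k0).
Proof.
  induction n as [| n IH].
  - rewrite Z.add_0_r. auto.
  - replace (k0 + Z.of_nat (S n))%Z with (k0 + Z.of_nat n + 1)%Z by lia.
    destruct (bounce_invariants (k0 + Z.of_nat n)) as (_ & -> & ->). exact IH.
Qed.

Lemma bounce_times n :
  tau (k0 + Z.of_nat n) = tau k0 + INR n * (-2 * dot (x (tau k0)) (vel k0)).
Proof.
  induction n as [| n IH].
  - rewrite Z.add_0_r. simpl. ring.
  - replace (k0 + Z.of_nat (S n))%Z with (k0 + Z.of_nat n + 1)%Z by lia.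
    destruct (bounce_invariants (k0 + Z.of_nat n)) as (Hstep & _).
    destruct (bounce_invariants_from n) as [Hc _].
    rewrite S_INR. lra.
Qed.

Lemma bounce_points phi d n :
  let c := dot (x (tau k0)) (vel k0) in
  x (tau k0) = (cos phi, sin phi) ->
  cos d = 1 - 2 * c * c -> sin d = -2 * c * cross (x (tau k0)) (vel k0) ->
  x (tau (k0 + Z.of_nat n)) = (cos (phi + INR n * d), sin (phi + INR n * d)).
Proof.
  intros c Hphi Hcd Hsd. induction n as [| n IH].
  - rewrite Z.add_0_r, Rmult_0_l, Rplus_0_r. exact Hphi.
  - replace (k0 + Z.of_nat (S n))%Z with (k0 + Z.of_nat n + 1)%Z by lia.
    destruct (bounce_invariants_from n) as [Hc Hs].
    assert (Hstep : tau (k0 + Z.of_nat n + 1)%Z - tau (k0 + Z.of_nat n) = -2 * c).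
    { replace (k0 + Z.of_nat n + 1)%Z with (k0 + Z.of_nat (S n))%Z by lia.
      rewrite !bounce_times, S_INR. fold c. ring. }
    rewrite bounce_chord, Hstep, IH, S_INR.
    replace (phi + (INR n + 1) * d) with ((phi + INR n * d) + d) by ring.
    rewrite IH in Hc, Hs. simpl.
    apply rotate_by_chord; [rewrite Hc, Hcd | rewrite Hs, Hsd]; fold c; ring.
Qed.

Lemma bounces_regular : exists phi d, 0 < d < 2 * PI /\ regular_bounces x (tau k0) phi d.
Proof.
  set (c := dot (x (tau k0)) (vel k0)).
  set (s := cross (x (tau k0)) (vel k0)).
  assert (Hcs : c * c + s * s = 1).
  { unfold c, s. rewrite dot_cross_sq, bounce_on_circle, vel_unit. ring. }
  assert (Hc : c < 0).
  { pose proof (tau_incr k0). destruct (bounce_invariants k0) as (Hstep & _).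
    replace (k0 + 1)%Z with (k0 + Z.of_nat 1)%Z in * by reflexivity. fold c in Hstep. lra. }
  destruct (polar_angle (1 - 2 * c * c) (-2 * c * s)) as (d & Hd & Hcd & Hsd).
  { transitivity (1 - 4 * c * c * (1 - (c * c + s * s))); [ring |]. rewrite Hcs. ring. }
  assert (Hd' : 0 < d < 2 * PI).
  { assert (cos d < 1) by nra.
    destruct Hd as [[Hd1 | <-] [Hd2 | ->]]; rewrite ?cos_0, ?cos_2PI in *; lra. }
  destruct (polar_angle (fst (x (tau k0))) (snd (x (tau k0)))) as (phi & _ & Hcp & Hsp).
  { exact (bounce_on_circle k0). }
  assert (Hphi : x (tau k0) = (cos phi, sin phi)).
  { rewrite Hcp, Hsp. destruct (x (tau k0)); reflexivity. }
  exists phi, d. split; [exact Hd' |]. intro n.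
  assert (HL : -2 * c = 2 * sin (d / 2)).
  { apply chord_length; [exact Hd' | lra | rewrite Hcd; field]. }
  rewrite <- HL, <- bounce_times. apply bounce_points; assumption.
Qed.

End BilliardBounces.

Lemma billiard_ray_regular_bounces x : billiard_ray x -> forall M,
  exists tau0 phi d, tau0 < M /\ 0 < d < 2 * PI /\ regular_bounces x tau0 phi d.
Proof.
  intros (tau & vel & Hinc & _ & Hdown & _ & Hbd & Hvel & Hseg & Hrefl) M.
  destruct (Hdown M) as [k0 Hk0].
  destruct (bounces_regular x tau vel Hinc Hbd Hvel Hseg Hrefl k0) as (phi & d & Hd & Hb).
  exists (tau k0), phi, d. auto.
Qed.

Lemma theta0_before v t0 t : t < t0 -> theta0 v t0 t = 0.
Proof. intro H. unfold theta0. destruct (Rlt_dec t t0); [reflexivity | contradiction]. Qed.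

Lemma theta0_after v t0 t : t0 <= t -> theta0 v t0 t = v * (t - t0).
Proof. intro H. unfold theta0. destruct (Rlt_dec t t0); [lra | reflexivity]. Qed.

Lemma Qset_on_circle eps a t0 v t ang :
  0 <= t -> 0 < eps -> in_arc a (ang - theta0 v t0 t) ->
  Qset eps a t0 v t (cos ang, sin ang).
Proof.
  intros Ht He [m Hm]. split; [exact Ht |].
  exists 1, (ang + 2 * PI * IZR m). split; [lra |]. split; [lra |].
  destruct (cos_sin_add_2PI_Z ang m) as [C S]. rewrite C, S, !Rmult_1_l. reflexivity.
Qed.

Lemma gliding_ray_meets_Q eps a t0 v x :
  0 < eps -> 0 < a -> 2 * PI < t0 -> gliding_ray x ->
  exists t, 0 < t < t0 /\ Qset eps a t0 v t (x t).
Proof.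
  intros He Ha Ht0 (th1 & sg & Hsg & Hx).
  destruct (shift_into_0_2PI (sg * (a / 2 - th1))) as [m Hm].
  exists (sg * (a / 2 - th1) + 2 * PI * IZR m). rewrite Hx.
  split; [lra |]. apply Qset_on_circle; [lra | lra |].
  rewrite theta0_before by lra.
  destruct Hsg as [-> | ->]; [exists (- m)%Z; rewrite opp_IZR | exists m]; lra.
Qed.

Lemma regular_bounces_meet_Q_static eps a t0 v x tau0 phi d :
  0 < eps -> tau0 <= 0 -> 6 < t0 -> 0 < d < 2 * PI -> 2 * PI - a < d < PI + a / 2 ->
  regular_bounces x tau0 phi d -> exists t, 0 < t < t0 /\ Qset eps a t0 v t (x t).
Proof.
  intros He Htau Ht0 Hd Hda Hx.
  destruct (chord_lt_arcs d Hd) as (Hs & _).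
  pose proof (SIN_bound (d / 2)).
  set (L := 2 * sin (d / 2)) in *.
  assert (HL : 0 < L <= 2) by (unfold L; lra).
  destruct (grid_point_after tau0 L 0) as [n0 Hn0]; [lra | lra |].
  destruct (in_arc_three_steps a (phi + INR n0 * d) d Hda) as (i & Hi & Harc).
  assert (Hi2 : 0 <= INR i <= 2).
  { split; [apply pos_INR |]. apply (le_INR i 2) in Hi. simpl in Hi. lra. }
  assert (0 <= INR i * L <= 2 * L) by nra.
  exists (tau0 + INR (n0 + i) * L). rewrite Hx, plus_INR.
  split; [lra |]. apply Qset_on_circle; [lra | lra |].
  rewrite theta0_before by lra.
  replace (phi + (INR n0 + INR i) * d - 0) with (phi + INR n0 * d + INR i * d) by ring.
  exact Harc.
Qed.

Lemma regular_bounces_meet_Q_rotating eps a t0 H x tau0 phi d :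
  0 < eps -> tau0 <= t0 -> 0 <= t0 -> 0 < d < 2 * PI ->
  arc_visits_within a (d - sin (d / 2)) (2 * sin (d / 2)) H ->
  regular_bounces x tau0 phi d ->
  exists t, 0 < t <= t0 + 2 + H /\ Qset eps a t0 (1/2) t (x t).
Proof.
  intros He Htau Ht0 Hd Hvisit Hx.
  destruct (chord_lt_arcs d Hd) as (Hs & _).
  pose proof (SIN_bound (d / 2)).
  set (L := 2 * sin (d / 2)) in *.
  assert (HL : 0 < L <= 2) by (unfold L; lra).
  destruct (grid_point_after tau0 L t0) as [n1 Hn1]; [lra | lra |].
  destruct (Hvisit (phi + INR n1 * d - 1/2 * (tau0 + INR n1 * L - t0))) as (j & Hj & Harc).
  assert (0 <= INR j * L) by (apply Rmult_le_pos; [apply pos_INR | lra]).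
  exists (tau0 + INR (n1 + j) * L). rewrite Hx, plus_INR.
  split; [lra |]. apply Qset_on_circle; [lra | lra |].
  rewrite theta0_after by lra.
  replace (phi + (INR n1 + INR j) * d - 1/2 * (tau0 + (INR n1 + INR j) * L - t0))
    with (phi + INR n1 * d - 1/2 * (tau0 + INR n1 * L - t0) + INR j * (d - sin (d / 2)))
    by (unfold L; field).
  exact Harc.
Qed.

Lemma chord_step_visits_or_near_pi a d : 4 * PI / 5 < a < PI -> 0 < d < 2 * PI ->
  PI - 1/10 < d - sin (d / 2) < PI + 1/10 \/
  arc_visits_within a (d - sin (d / 2)) (2 * sin (d / 2)) 390.
Proof.
  intros Ha Hd. pose proof PI_gt_3. pose proof PI_lt_7_2.
  destruct (chord_lt_arcs d Hd) as (Hs & HLd & HLd').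
  pose proof (SIN_bound (d / 2)).
  set (g := d - sin (d / 2)).
  destruct (Rlt_dec g a) as [C1 | C1].
  { right. apply (arc_visits_within_multiple a g _ _ 2 g 1 0);
      [simpl; ring | rewrite Rabs_pos_eq | | rewrite Rabs_pos_eq | rewrite Rabs_pos_eq];
      unfold g in *; simpl; lra. }
  destruct (Rlt_dec (2 * PI - a) g) as [C2 | C2].
  { right. apply (arc_visits_within_multiple a g _ _ 1 (g - 2 * PI) 1 (-1));
      [simpl; ring | rewrite Rabs_left | | rewrite Rabs_left | rewrite Rabs_left];
      unfold g in *; simpl; lra. }
  destruct (Rle_dec g (PI - 1/10)) as [C3 | C3].
  { right. apply (arc_visits_within_multiple a g _ _ 20 (2 * g - 2 * PI) 2 (-1));
      [simpl; ring | rewrite Rabs_left | | rewrite Rabs_left | rewrite Rabs_left];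
      unfold g in *; simpl; lra. }
  destruct (Rle_dec (PI + 1/10) g) as [C4 | C4].
  { right. apply (arc_visits_within_multiple a g _ _ 20 (2 * g - 2 * PI) 2 (-1));
      [simpl; ring | rewrite Rabs_pos_eq | | rewrite Rabs_pos_eq | rewrite Rabs_pos_eq];
      unfold g in *; simpl; lra. }
  left. unfold g in *. lra.
Qed.

Lemma billiard_ray_meets_Q eps a t0 x :
  0 < eps -> 4 * PI / 5 < a < PI -> 2 * PI < t0 -> billiard_ray x ->
  exists t, 0 < t < t0 + 400 /\ Qset eps a t0 (1/2) t (x t).
Proof.
  intros He Ha Ht0 Hx. pose proof PI_gt_3.
  destruct (billiard_ray_regular_bounces x Hx 0) as (tau0 & phi & d & Htau0 & Hd & Hb).
  destruct (chord_step_visits_or_near_pi a d Ha Hd) as [Hnear | Hvisit].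
  - apply (chord_angle_near_period_two a) in Hnear; [| lra].
    destruct (regular_bounces_meet_Q_static eps a t0 (1/2) x tau0 phi d)
      as (t & Ht & HQ); auto; try lra.
    exists t. split; [lra | exact HQ].
  - destruct (regular_bounces_meet_Q_rotating eps a t0 390 x tau0 phi d)
      as (t & Ht & HQ); auto; try lra.
    exists t. split; [lra | exact HQ].
Qed.

Theorem proposition3p3 (eps a t0 : R) :
  0 < eps < 1 -> 4 * PI / 5 < a < PI -> 2 * PI < t0 ->
  exists v, 0 < v < 1 /\ T0_finite (Qset eps a t0 v).
Proof.
  intros He Ha Ht0. pose proof PI_RGT_0.
  exists (1/2). split; [lra |].
  exists (t0 + 400). split; [lra |].
  intros x [Hb | Hg].
  - apply billiard_ray_meets_Q; auto; lra.
  - destruct (gliding_ray_meets_Q eps a t0 (1/2) x) as (t & Ht & HQ); auto; try lra.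
    exists t. split; [lra | exact HQ].
Qed.
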